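(* Let $q$ be a prime power, $\eta\ge1$ an integer, $\delta_T<0$ and $\delta_X>0$ integers. Let $C^\star_\eta(\delta_T,\delta_X)$ be the code obtained from $C_\eta(\delta_T,\delta_X)$ by puncturing at the $q+1$ coordinates corresponding to the $\mathbb{F}_q$-rational points of $\mathcal{H}_\eta$ with $x_1=0$ (the points with representatives $(1,a,0,1)$, $a\in\mathbb{F}_q$, and $(0,1,0,1)$). Then $C^\star_\eta(\delta_T,\delta_X)$ has length $q(q+1)$ and has the same dimension and the same minimum distance as $C_\eta(\delta_T,\delta_X)$.
   Context: $R=\mathbb{F}_q[T_1,T_2,X_1,X_2]$; the bidegree of $T_1^{c_1}T_2^{c_2}X_1^{d_1}X_2^{d_2}$ is $(c_1+c_2-\eta d_1,d_1+d_2)$; $R(\delta_T,\delta_X)$ is the span of monomials of that bidegree. The Hirzebruch surface $\mathcal{H}_\eta$ is the quotient of $(\mathbb{A}^2\setminus\{0\})^2$ by $\mathbb{G}_m^2$ acting by $(\lambda,\mu)\cdot(t_1,t_2,x_1,x_2)=(\lambda t_1,\lambda t_2,\mu\lambda^{-\eta}x_1,\mu x_2)$; each of its $(q+1)^2$ $\mathbb{F}_q$-points has a unique representative $(1,a,1,b)$, $(0,1,1,b)$, $(1,a,0,1)$ or $(0,1,0,1)$ ($a,b\in\mathbb{F}_q$), where polynomials are evaluated. $C_\eta(\delta_T,\delta_X)\subset\mathbb{F}_q^{(q+1)^2}$ is the image of $F\mapsto(F(P))_{P\in\mathcal{H}_\eta(\mathbb{F}_q)}$ on $R(\delta_T,\delta_X)$.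 *)

From HB Require Import structures.
From mathcomp Require Import all_boot all_order all_algebra all_field.
Set Implicit Arguments. Unset Strict Implicit. Unset Printing Implicit Defensive.
Import Order.TTheory GRing.Theory Num.Theory.
Local Open Scope ring_scope.

(* F_q-points of the Hirzebruch surface H_eta, indexed by
   (option F) * (option F):
     (Some a, Some b) <-> (1,a,1,b);  (None, Some b) <-> (0,1,1,b);
     (Some a, None)   <-> (1,a,0,1);  (None, None)   <-> (0,1,0,1).   *)
Definition hpt (F : finFieldType) := (option F * option F)%type.

(* points with x_1 <> 0 (those kept after puncturing) *)
Definition hpt_star (F : finFieldType) := (option F * F)%type.

Definition tcoord (F : finFieldType) (t : option F) : F * F :=
  match t with Some a => (1, a) | None => (0, 1) end.

Definition expo := (nat * nat * nat * nat)%type.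

Definition eval_mono (F : finFieldType) (m : expo) (P : hpt F) : F :=
  let: (c1, c2, d1, d2) := m in
  let: (t1, t2) := tcoord P.1 in
  let: (x1, x2) := tcoord P.2 in
  t1 ^+ c1 * t2 ^+ c2 * x1 ^+ d1 * x2 ^+ d2.

Definition has_bideg (eta : nat) (dT dX : int) (m : expo) : bool :=
  let: (c1, c2, d1, d2) := m in
  ((c1 + c2)%:Z - (eta * d1)%:Z == dT) && ((d1 + d2)%:Z == dX).

(* bound on exponents: any monomial of bidegree (dT,dX) has all exponents
   <= |dT| + eta*|dX| (since d1,d2 <= dX and c1+c2 = dT + eta d1) *)
Definition expo_bound (eta : nat) (dT dX : int) : nat :=
  (`|dT| + eta * `|dX|)%N.

Definition monos (eta : nat) (dT dX : int) : seq expo :=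
  let N := (expo_bound eta dT dX).+1 in
  let s := iota 0 N in
  [seq m <- [seq (cc.1, cc.2, dd.1, dd.2)
              | cc <- [seq (c1, c2) | c1 <- s, c2 <- s],
                dd <- [seq (d1, d2) | d1 <- s, d2 <- s]]
   | has_bideg eta dT dX m].

Definition ev_vec (F : finFieldType) (m : expo) : {ffun hpt F -> F^o} :=
  [ffun P => (eval_mono m P : F^o)].

(* C_eta(dT,dX) : the image of the evaluation map on R(dT,dX), i.e. the span
   of the evaluation vectors of the monomials spanning R(dT,dX) *)
Definition Hcode (F : finFieldType) (eta : nat) (dT dX : int)
  : {vspace {ffun hpt F -> F^o}} :=
  <<[seq ev_vec F m | m <- monos eta dT dX]>>%VS.

Definition restr (F : finFieldType) (v : {ffun hpt F -> F^o})
  : {ffun hpt_star F -> F^o} :=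
  [ffun P : hpt_star F => v (P.1, Some P.2)].

Definition Hcode_star (F : finFieldType) (eta : nat) (dT dX : int)
  : {vspace {ffun hpt_star F -> F^o}} :=
  (linfun (@restr F) @: Hcode F eta dT dX)%VS.

Definition wt (F : finFieldType) (I : finType) (v : {ffun I -> F^o}) : nat :=
  #|[set i | v i != 0]|.

Definition has_min_dist (F : finFieldType) (I : finType)
  (C : {vspace {ffun I -> F^o}}) (d : nat) : Prop :=
  (exists2 v, (v \in C) && (v != 0) & wt v = d) /\
  (forall v, v \in C -> v != 0 -> (d <= wt v)%N).

(* Every monomial of bidegree (dT, dX) with dT < 0 is divisible by X1, since
   c1 + c2 - eta d1 = dT < 0 forces d1 > 0.  Hence every codeword vanishes at
   the points with x1 = 0, so deleting these coordinates is a weight-preserving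
   linear map on the code: it is injective and keeps all the weights. *)
From HB Require Import structures.
From mathcomp Require Import all_boot all_order all_algebra all_field.
Import Order.TTheory GRing.Theory Num.Theory.
Local Open Scope ring_scope.

Section Weight.
Variable F : finFieldType.

Lemma wt_eq0 (I : finType) (v : {ffun I -> F^o}) : (wt v == 0%N) = (v == 0).
Proof.
rewrite /wt cards_eq0; apply/eqP/eqP => [v0 | ->].
  apply/ffunP => i; move/setP/(_ i): v0; rewrite !inE ffunE.
  by move/negbFE/eqP.
by apply/setP => i; rewrite !inE ffunE eqxx.
Qed.

Lemma wt_comp_inj (I J : finType) (f : J -> I) (v : {ffun I -> F^o}) :
  injective f -> (forall i, v i != 0 -> i \in codom f) ->
  wt [ffun j => v (f j)] = wt v.
Proof.
move=> f_inj supp_v; rewrite /wt -(card_imset _ f_inj); apply: eq_card => i.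
rewrite inE; apply/imsetP/idP => [[j] | vi].
  by rewrite inE ffunE => ? ->.
have /codomP[j fj] := supp_v i vi.
by exists j; rewrite // inE ffunE -fj.
Qed.

Lemma span_ffun_eq0 (I : finType) (X : seq {ffun I -> F^o}) (i : I) v :
  {in X, forall x : {ffun I -> F^o}, x i = 0} -> v \in <<X>>%VS -> v i = 0.
Proof.
move=> X_i0 /(coord_span (X := in_tuple X)) ->.
rewrite sum_ffunE big1 // => k _.
by rewrite ffunE X_i0 ?scaler0 //; apply: mem_nth.
Qed.

Section WeightPreservingMap.
Variables I J : finType.
Variable L : 'Hom({ffun I -> F^o}, {ffun J -> F^o}).
Variable C : {vspace {ffun I -> F^o}}.
Hypothesis wtL : {in C, forall v, wt (L v) = wt v}.

Lemma wt_preserving_eq0 v : v \in C -> (L v == 0) = (v == 0).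
Proof. by move=> vC; rewrite -!wt_eq0 wtL. Qed.

Lemma dim_img_wt_preserving : \dim (L @: C) = \dim C.
Proof.
apply: limg_dim_eq; apply/eqP; rewrite -subv0; apply/subvP => v.
rewrite memv_cap memv_ker memv0 => /andP[vC Lv0].
by rewrite -wt_preserving_eq0.
Qed.

Lemma min_dist_img_wt_preserving d :
  has_min_dist (L @: C) d <-> has_min_dist C d.
Proof.
split=> [[[w /andP[/memv_imgP[v vC ->] Lv_nz] wd] Hmin]
        |[[v /andP[vC v_nz] vd] Hmin]]; split.
- by exists v; rewrite ?vC -?wt_preserving_eq0 // -wtL.
- move=> u uC u_nz; rewrite -wtL //; apply: Hmin; first exact: memv_img.
  by rewrite wt_preserving_eq0.
- by exists (L v); rewrite ?memv_img ?wt_preserving_eq0 ?wtL.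
- move=> _ /memv_imgP[u uC ->]; rewrite wt_preserving_eq0 // wtL //.
  exact: Hmin.
Qed.

End WeightPreservingMap.
End Weight.

Section Hirzebruch.
Variables (F : finFieldType) (eta : nat) (dT dX : int).
Hypothesis dT_lt0 : dT < 0.

Lemma eval_mono_x1_eq0 m a :
  m \in monos eta dT dX -> eval_mono m (a, None) = 0 :> F.
Proof.
rewrite mem_filter => /andP[]; case: m => [[[c1 c2] [|d1]] d2] /= /andP[/eqP bdT _] _.
  by move: dT_lt0; rewrite -bdT muln0 subr0.
by case: (tcoord a) => t1 t2; rewrite expr0n /= !mulr0 mul0r.
Qed.

Lemma Hcode_x1_eq0 v a : v \in Hcode F eta dT dX -> v (a, None) = 0.
Proof.
apply: span_ffun_eq0 => _ /mapP[m m_mono ->].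
by rewrite ffunE; apply: eval_mono_x1_eq0.
Qed.

Lemma restr_is_linear : linear (@restr F).
Proof. by move=> k u v; apply/ffunP => P; rewrite !ffunE. Qed.

HB.instance Definition _ :=
  GRing.isLinear.Build F^o _ _ _ (@restr F) restr_is_linear.

Lemma wt_restr v : v \in Hcode F eta dT dX -> wt (linfun (@restr F) v) = wt v.
Proof.
move=> vC; rewrite lfunE; apply: wt_comp_inj => [[a b] [a' b'] /= [-> ->] //|].
case=> a [b|] vP; first by apply/codomP; exists (a, b).
by rewrite Hcode_x1_eq0 ?eqxx in vP.
Qed.

End Hirzebruch.

Theorem theorem6p1 (F : finFieldType) (eta : nat) (dT dX : int) :
  (1 <= eta)%N -> dT < 0 -> 0 < dX ->
  #|{: hpt_star F}| = (#|F| * (#|F| + 1))%N /\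
  \dim (Hcode_star F eta dT dX) = \dim (Hcode F eta dT dX) /\
  (forall d : nat,
     has_min_dist (Hcode_star F eta dT dX) d <-> has_min_dist (Hcode F eta dT dX) d).
Proof.
move=> _ dT_lt0 _; have wtP := wt_restr F eta dT dX dT_lt0.
split; first by rewrite card_prod card_option mulnC addn1.
split; first exact: dim_img_wt_preserving.
by move=> d; apply: min_dist_img_wt_preserving.
Qed.
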